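(* $\{\delta\in N:\delta^2=-4,\ \delta/2\in N^*\}=\{r+\rho(r):r\in N,\ r^2=-2\}.$
   Context: Lattices: $U$ has Gram matrix $\begin{pmatrix}0&1\\1&0\end{pmatrix}$; $D_4$ negative definite; $U(2)$ is $U$ with doubled form. $N=U\oplus U(2)\oplus D_4\oplus D_4$, $N^*$ its dual. $\rho=\rho_1\oplus\rho_0\oplus\rho_0\in O(N)$, where for $D_4=\{x\in\mathbb Z^4:\sum x_i\equiv0\bmod 2\}$ (negative standard inner product) $\rho_0(x_1,x_2,x_3,x_4)=(x_2,-x_1,x_4,-x_3)$, and for standard hyperbolic bases $e,f$ of $U$, $e',f'$ of $U(2)$, $\rho_1(e)=-e-e'$, $\rho_1(f)=f-f'$, $\rho_1(e')=e'+2e$, $\rho_1(f')=2f-f'$. $\rho$ acts trivially on $N^*/N$. *)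

From HB Require Import structures.
From mathcomp Require Import all_boot all_order all_algebra.
Set Implicit Arguments. Unset Strict Implicit. Unset Printing Implicit Defensive.
Import Order.TTheory GRing.Theory Num.Theory.
Local Open Scope ring_scope.

(* Coordinates of the ambient Z^12 of N = U (+) U(2) (+) D4 (+) D4:
   index 0 : e, 1 : f            (standard hyperbolic basis of U)
   index 2 : e', 3 : f'          (standard hyperbolic basis of U(2))
   indices 4..7  : first D4  (as a sublattice of Z^4, negative standard form)
   indices 8..11 : second D4. *)

Definition coord (v : 'rV[int]_12) (k : nat) : int := v 0 (inord k).

Definition gramN : 'M[int]_12 :=
  \matrix_(i < 12, j < 12)
    match nat_of_ord i, nat_of_ord j with
    | 0, 1 | 1, 0 => 1
    | 2, 3 | 3, 2 => 2
    | _, _ => if (4 <= i)%N && (i == j) then -1 else 0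
    end.

Definition bN (x y : 'rV[int]_12) : int := (x *m gramN *m y^T) 0 0.

Definition inN (x : 'rV[int]_12) : Prop :=
  (2 %| coord x 4 + coord x 5 + coord x 6 + coord x 7)%Z /\
  (2 %| coord x 8 + coord x 9 + coord x 10 + coord x 11)%Z.

Definition toQ (x : 'rV[int]_12) : 'rV[rat]_12 := map_mx (fun z : int => z%:~R) x.
Definition bQ (v w : 'rV[rat]_12) : rat :=
  (v *m map_mx (fun z : int => z%:~R) gramN *m w^T) 0 0.
Definition inNdual (v : 'rV[rat]_12) : Prop :=
  forall x : 'rV[int]_12, inN x -> exists z : int, bQ v (toQ x) = z%:~R.

(* rho = rho_1 (+) rho_0 (+) rho_0.
   rho_1(a e + b f + c e' + d f') = (-a+2c) e + (b+2d) f + (-a+c) e' + (-b-d) f'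
   (from rho_1 e = -e-e', rho_1 f = f-f', rho_1 e' = e'+2e, rho_1 f' = 2f-f'),
   rho_0(x1,x2,x3,x4) = (x2,-x1,x4,-x3). *)
Definition rho (v : 'rV[int]_12) : 'rV[int]_12 :=
  \row_(i < 12)
    match nat_of_ord i with
    | 0 => - coord v 0 + 2 * coord v 2
    | 1 => coord v 1 + 2 * coord v 3
    | 2 => - coord v 0 + coord v 2
    | 3 => - coord v 1 - coord v 3
    | 4 => coord v 5
    | 5 => - coord v 4
    | 6 => coord v 7
    | 7 => - coord v 6
    | 8 => coord v 9
    | 9 => - coord v 8
    | 10 => coord v 11
    | _ => - coord v 10
    end.

From Pilot Require Import Defs.
From HB Require Import structures.
From mathcomp Require Import all_boot all_order all_algebra.
From mathcomp Require Import ring zify.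
Import Order.TTheory GRing.Theory Num.Theory.
Local Open Scope ring_scope.

(* [rho] is an isometry of [N] with [rho^2 = -1], so [v] is orthogonal to [rho v] and
   [(v + rho v)^2 = 2 v^2].  Since [(1 + rho)(1 - rho) = 2], a vector [d] lies in
   [(1 + rho) N] exactly when [(d - rho d)/2] is an integral vector of [N].  Pairing [d]
   with a few vectors of [N] shows that [d/2 \in N^*] means: the [e]- and [f]-coordinates
   of [d] are even and within each [D4] block all four coordinates have the same parity.
   These are precisely the conditions making [(d - rho d)/2] integral and in [N]. *)

Local Notation c := Defs.coord.

Lemma coord_row (F : 'I_12 -> int) k : c (\row_i F i) k = F (inord k).
Proof. by rewrite /Defs.coord mxE. Qed.

Lemma coordD (u v : 'rV[int]_12) k : c (u + v) k = c u k + c v k.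
Proof. by rewrite /Defs.coord mxE. Qed.

Lemma coordN (v : 'rV[int]_12) k : c (- v) k = - c v k.
Proof. by rewrite /Defs.coord !mxE. Qed.

Lemma coord_inj12 (u v : 'rV[int]_12) :
  c u 0 = c v 0 -> c u 1 = c v 1 -> c u 2 = c v 2 -> c u 3 = c v 3 ->
  c u 4 = c v 4 -> c u 5 = c v 5 -> c u 6 = c v 6 -> c u 7 = c v 7 ->
  c u 8 = c v 8 -> c u 9 = c v 9 -> c u 10 = c v 10 -> c u 11 = c v 11 -> u = v.
Proof.
move=> h0 h1 h2 h3 h4 h5 h6 h7 h8 h9 h10 h11; apply/rowP => -[k hk].
rewrite -[Ordinal hk]inord_val /=.
by do 12 (case: k hk => [|k] hk; first done).
Qed.

Definition halve (v : 'rV[int]_12) : 'rV[int]_12 := map_mx (fun z => (z %/ 2)%Z) v.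

Lemma coord_halve (v : 'rV[int]_12) k : c (halve v) k = (c v k %/ 2)%Z.
Proof. by rewrite /Defs.coord mxE. Qed.

Arguments Defs.coord : simpl never.

Ltac coord_simpl :=
  rewrite /rho ?(coordD, coordN, coord_halve, coord_row) ?inordK //=.

Lemma sum_ord12 (V : nmodType) (F : 'I_12 -> V) : \sum_(i < 12) F i =
  F (inord 0) + F (inord 1) + F (inord 2) + F (inord 3) + F (inord 4) + F (inord 5)
  + F (inord 6) + F (inord 7) + F (inord 8) + F (inord 9) + F (inord 10) + F (inord 11).
Proof.
rewrite (eq_bigr (fun i : 'I_12 => F (inord i))) => [|i _]; last by rewrite inord_val.
by rewrite -(big_mkord xpredT (fun k => F (inord k))) /index_iota /= !big_cons big_nil addr0 !addrA.
Qed.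

Definition gram_entry (m n : nat) : int :=
  match m, n with
  | 0, 1 | 1, 0 => 1
  | 2, 3 | 3, 2 => 2
  | _, _ => if (4 <= m)%N && (m == n) then -1 else 0
  end.

Lemma gramN_inord m n : (m < 12)%N -> (n < 12)%N ->
  gramN (inord m) (inord n) = gram_entry m n.
Proof. by move=> hm hn; rewrite mxE -(inj_eq val_inj) /= !inordK. Qed.

Lemma bN_coordE (x y : 'rV[int]_12) : bN x y =
  c x 0 * c y 1 + c x 1 * c y 0 + 2 * (c x 2 * c y 3 + c x 3 * c y 2)
  - (c x 4 * c y 4 + c x 5 * c y 5 + c x 6 * c y 6 + c x 7 * c y 7)
  - (c x 8 * c y 8 + c x 9 * c y 9 + c x 10 * c y 10 + c x 11 * c y 11).
Proof.
rewrite /bN !mxE !sum_ord12 !mxE !sum_ord12 !gramN_inord // /gram_entry /=.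
by rewrite /Defs.coord; ring.
Qed.

Lemma bN_add_rho (v : 'rV[int]_12) : bN (v + rho v) (v + rho v) = 2 * bN v v.
Proof. by rewrite !bN_coordE; coord_simpl; ring. Qed.

Definition even_pairing_N (d : 'rV[int]_12) : Prop :=
  forall x, inN x -> (2 %| bN d x)%Z.

Lemma half_int (b z : int) : (1 / 2 : rat) * b%:~R = z%:~R -> b = z * 2.
Proof.
move=> h; apply: (@intr_inj rat); rewrite intrM -h.
by rewrite (_ : (2 : int)%:~R = 2 :> rat) //; field.
Qed.

Lemma bQ_scale_toQ (a : rat) (u w : 'rV[int]_12) :
  bQ (a *: toQ u) (toQ w) = a * (bN u w)%:~R.
Proof. by rewrite /bQ /toQ -!scalemxAl mxE map_trmx -!map_mxM mxE. Qed.

Lemma inNdual_halfE (d : 'rV[int]_12) :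
  inNdual ((1 / 2 : rat) *: toQ d) <-> even_pairing_N d.
Proof.
split=> [hd x hx | hd x hx].
- have [z] := hd x hx; rewrite bQ_scale_toQ => /half_int hz.
  by apply/dvdzP; exists z.
- have /dvdzP [z hz] := hd x hx; exists z.
  by rewrite bQ_scale_toQ hz intrM (_ : (2 : int)%:~R = 2 :> rat) //; field.
Qed.

Definition same_parity4 (y1 y2 y3 y4 : int) : Prop :=
  [/\ (2 %| y2 - y1)%Z, (2 %| y3 - y1)%Z & (2 %| y4 - y1)%Z].

Definition twice_dual_parity (d : 'rV[int]_12) : Prop :=
  [/\ (2 %| c d 0)%Z, (2 %| c d 1)%Z,
      same_parity4 (c d 4) (c d 5) (c d 6) (c d 7)
    & same_parity4 (c d 8) (c d 9) (c d 10) (c d 11)].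

Lemma twice_dual_parity_inN (d : 'rV[int]_12) : twice_dual_parity d -> inN d.
Proof. by case=> _ _ [? ? ?] [? ? ?]; split; lia. Qed.

Lemma same_parity4_pairing (y1 y2 y3 y4 x1 x2 x3 x4 : int) :
  same_parity4 y1 y2 y3 y4 -> (2 %| x1 + x2 + x3 + x4)%Z ->
  (2 %| y1 * x1 + y2 * x2 + y3 * x3 + y4 * x4)%Z.
Proof.
case=> h2 h3 h4 hx.
have -> : y1 * x1 + y2 * x2 + y3 * x3 + y4 * x4 =
  y1 * (x1 + x2 + x3 + x4) + (y2 - y1) * x2 + (y3 - y1) * x3 + (y4 - y1) * x4 by ring.
by do !apply: rpredD; [exact: dvdz_mull | exact: dvdz_mulr ..].
Qed.

Definition indicator_row (l : seq nat) : 'rV[int]_12 :=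
  \row_(i < 12) (if (i : nat) \in l then 1 else 0).

Lemma even_pairing_parity (d : 'rV[int]_12) :
  even_pairing_N d <-> twice_dual_parity d.
Proof.
split=> [hd | [h0 h1 hA hB] x [hx1 hx2]].
- have hpair l : inN (indicator_row l) -> (2 %| bN d (indicator_row l))%Z by exact: hd.
  have := hpair [:: 1]; have := hpair [:: 0].
  have := hpair [:: 4; 5]; have := hpair [:: 4; 6]; have := hpair [:: 4; 7].
  have := hpair [:: 8; 9]; have := hpair [:: 8; 10]; have := hpair [:: 8; 11].
  rewrite /twice_dual_parity /same_parity4 /inN !bN_coordE /indicator_row; coord_simpl.
  by move=> *; do ![split]; lia.
- rewrite bN_coordE.
  have hU : (2 %| c d 0 * c x 1 + c d 1 * c x 0 + 2 * (c d 2 * c x 3 + c d 3 * c x 2))%Z.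
    by do !apply: rpredD; apply: dvdz_mulr.
  apply: rpredB; first (apply: rpredB; first exact: hU).
  all: exact: same_parity4_pairing.
Qed.

Lemma twice_dual_parity_image (d : 'rV[int]_12) :
  twice_dual_parity d <-> exists r, inN r /\ d = r + rho r.
Proof.
split=> [[h0 h1 [h5 h6 h7] [h9 h10 h11]] | [r [[hr1 hr2] ->]]].
- exists (halve (d - rho d)); split.
  + by split; coord_simpl; lia.
  + by apply: coord_inj12; coord_simpl; lia.
- by rewrite /twice_dual_parity /same_parity4; coord_simpl; do ![split]; lia.
Qed.

Theorem lemma4p5 (delta : 'rV[int]_12) :
  (inN delta /\ bN delta delta = -4 /\ inNdual ((1 / 2 : rat) *: toQ delta)) <->
  (exists r : 'rV[int]_12, inN r /\ bN r r = -2 /\ delta = r + rho r).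
Proof.
split.
- case=> _ [hnorm /inNdual_halfE /even_pairing_parity /twice_dual_parity_image].
  case=> r [hr hd]; exists r; split=> //; split=> //.
  by move: hnorm; rewrite hd bN_add_rho; lia.
- case=> r [hr [hnorm hd]].
  have hpar : twice_dual_parity delta by apply/twice_dual_parity_image; exists r.
  split; first exact: twice_dual_parity_inN.
  split; first by rewrite hd bN_add_rho hnorm.
  exact/inNdual_halfE/even_pairing_parity.
Qed.
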